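(* Let $\theta$ be a quadratic irrational with $0<\theta<1$ and $\overline{\theta}<0$ (where $\overline{\theta}$ is the algebraic conjugate of $\theta$), and let $\rho\in\mathbb{R}$ with $0 \le \rho \le 1+\theta$. Let $\mathbf{u}$ be a Sturmian word with parameters $\ell_0 = 1, \ell_1 = \theta, \rho$, or with parameters $\ell_0 = \theta, \ell_1 = 1, \rho$. (1) If $\rho = \ell_1$, then $\mathbf{u}$ is fixed by a primitive morphism $\varphi_w$ with $w\in\{b,\beta\}^*$. (2) If $\rho = 0$, then $\mathbf{u}$ is fixed by a primitive morphism $\varphi_w$ with $w\in\{b,\alpha\}^*$. (3) If $\rho = \ell_0+\ell_1$, then $\mathbf{u}$ is fixed by a primitive morphism $\varphi_w$ with $w\in\{a,\beta\}^*$. (4) If $\rho = \ell_0$, then $\mathbf{u}$ is fixed by a primitive morphism $\varphi_w$ with $w\in\{a,\alpha\}^*$.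
   Context: Morphisms on $\{0,1\}^*$: $\varphi_a: 0\mapsto 0, 1 \mapsto 10$; $\varphi_b: 0 \mapsto 0, 1\mapsto 01$; $\varphi_\alpha: 0\mapsto 01, 1\mapsto 1$; $\varphi_\beta: 0\mapsto 10, 1 \mapsto 1$; for $w=w_0\cdots w_{m-1}$, $\varphi_w = \varphi_{w_0}\circ\cdots\circ\varphi_{w_{m-1}}$. A morphism is primitive if some power maps every letter to a word containing every letter. Two interval exchange words: given $\ell_0,\ell_1>0$, take either $I=[0,\ell_0+\ell_1)$, $I_0=[0,\ell_0)$, $I_1=[\ell_0,\ell_0+\ell_1)$ (lower case) or $I=(0,\ell_0+\ell_1]$, $I_0=(0,\ell_0]$, $I_1=(\ell_0,\ell_0+\ell_1]$ (upper case); $T(x)=x+\ell_1$ on $I_0$, $T(x)=x-\ell_0$ on $I_1$; for $\rho\in I$, $u_n = 0$ if $T^n(\rho)\in I_0$ and $u_n=1$ otherwise. With $\ell_1/(\ell_0+\ell_1)$ irrational these are the Sturmian words; ''Sturmian word with parameters $\ell_0,\ell_1,\rho$'' means such a lower or upper coding. *)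

From Stdlib Require Import Reals ZArith.
From mathcomp Require Import all_boot.

Set Implicit Arguments.
Unset Strict Implicit.
Unset Printing Implicit Defensive.

(* Letters 0 and 1 are encoded as false and true respectively. *)
Definition morphism := bool -> seq bool.

Definition mapply (f : morphism) (s : seq bool) : seq bool := flatten (map f s).

Definition mcomp (f g : morphism) : morphism := fun x => mapply f (g x).

Definition mid : morphism := fun x => [:: x].

Inductive mletter := La | Lb | Lalpha | Lbeta.

Definition mletter_eqb (x y : mletter) : bool :=
  match x, y with
  | La, La | Lb, Lb | Lalpha, Lalpha | Lbeta, Lbeta => true
  | _, _ => false
  end.

(* phi_a: 0->0, 1->10 ; phi_b: 0->0, 1->01 ;
   phi_alpha: 0->01, 1->1 ; phi_beta: 0->10, 1->1 *)
Definition phi_letter (c : mletter) : morphism :=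
  match c with
  | La => fun x => if x then [:: true; false] else [:: false]
  | Lb => fun x => if x then [:: false; true] else [:: false]
  | Lalpha => fun x => if x then [:: true] else [:: false; true]
  | Lbeta => fun x => if x then [:: true] else [:: true; false]
  end.

Definition phi_word (w : seq mletter) : morphism :=
  foldr (fun c acc => mcomp (phi_letter c) acc) mid w.

Definition mpow (f : morphism) (k : nat) : morphism := iter k (mcomp f) mid.

Definition primitive_morphism (f : morphism) : Prop :=
  exists k : nat, forall x y : bool, y \in mpow f k x.

(* An infinite word u is fixed by f: f(u) = u, i.e. the image of every prefix
   of u is a prefix of u (for a nonerasing morphism such as every phi_w this
   is exactly f(u) = u). *)
Definition fixed_by (f : morphism) (u : nat -> bool) : Prop :=
  forall n : nat, let s := mapply f (mkseq u n) in
    forall i : nat, i < size s -> nth false s i = u i.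

Definition word_over (A : seq mletter) (w : seq mletter) : bool :=
  all (fun c => has (mletter_eqb c) A) w.

Open Scope R_scope.

Definition irrational (x : R) : Prop :=
  ~ exists p q : Z, q <> 0%Z /\ x = IZR p / IZR q.

(* x is an irrational root of a x^2 + b x + c with integers a <> 0, and the
   other root of that polynomial, -b/a - x, is xbar. *)
Definition quad_irrational_with_conj (x xbar : R) : Prop :=
  irrational x /\
  exists a b c : Z, a <> 0%Z /\
    IZR a * x ^ 2 + IZR b * x + IZR c = 0 /\
    xbar = - (IZR b / IZR a) - x.

(* Lower case: I = [0, l0+l1), I0 = [0, l0), I1 = [l0, l0+l1). *)
Definition T_lower (l0 l1 : R) (x : R) : R :=
  if Rlt_dec x l0 then x + l1 else x - l0.
Definition coding_lower (l0 l1 rho : R) (n : nat) : bool :=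
  let y := iter n (T_lower l0 l1) rho in
  if Rle_dec 0 y then (if Rlt_dec y l0 then false else true) else true.

(* Upper case: I = (0, l0+l1], I0 = (0, l0], I1 = (l0, l0+l1]. *)
Definition T_upper (l0 l1 : R) (x : R) : R :=
  if Rle_dec x l0 then x + l1 else x - l0.
Definition coding_upper (l0 l1 rho : R) (n : nat) : bool :=
  let y := iter n (T_upper l0 l1) rho in
  if Rlt_dec 0 y then (if Rle_dec y l0 then false else true) else true.

Definition sturmian_param (l0 l1 rho : R) (u : nat -> bool) : Prop :=
  (0 <= rho < l0 + l1 /\ forall n, u n = coding_lower l0 l1 rho n) \/
  (0 < rho <= l0 + l1 /\ forall n, u n = coding_upper l0 l1 rho n).

Close Scope R_scope.

From Stdlib Require Import Reals ZArith Lra Lia Psatz.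
From mathcomp Require Import all_boot ssrZ.
Import ssrZ.Instances.

Set Implicit Arguments.
Unset Strict Implicit.
Unset Printing Implicit Defensive.

(* Rauzy induction, which shortens the longer of the two intervals by the
   shorter one, desubstitutes Sturmian codings: the coding with lengths
   (l0, l1) is the image under phi_a or phi_b (when l1 < l0), or under phi_alpha
   or phi_beta (when l0 < l1), of the coding with the new lengths, and each of
   the points 0, l0, l1, l0 + l1 is carried to the corresponding point.  On the
   ratio l1 / l0 the induction acts by the Farey map.  When the ratio is a
   quadratic irrational with negative conjugate, the integer equation of ratio
   and conjugate keeps its discriminant, and the sign condition bounds its
   coefficients; so some equation recurs, and since the pair (ratio, conjugate)
   determines its predecessor (as in Galois' theorem on purely periodic
   continued fractions), the ratio is purely periodic.  After one period the
   lengths are proportional to the original ones and codings are invariant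
   under scaling, so the composed morphism phi_w fixes u.  Each kind of step
   moves the ratio monotonically, so both kinds occur in a period, which makes
   phi_w primitive. *)

(** * Images of infinite words *)

Definition image_of (f : morphism) (v u : nat -> bool) : Prop :=
  forall n i, i < size (mapply f (mkseq v n)) ->
    nth false (mapply f (mkseq v n)) i = u i.

(* [fixed_by f u] is convertible to [image_of f u u]. *)

Lemma mapply_cat f s t : mapply f (s ++ t) = mapply f s ++ mapply f t.
Proof. by rewrite /mapply map_cat flatten_cat. Qed.

Lemma mapply_mcomp f g s : mapply (mcomp f g) s = mapply f (mapply g s).
Proof. by elim: s => [|a s IH] //=; rewrite [RHS]mapply_cat -IH. Qed.

Lemma mapply_mid s : mapply mid s = s.
Proof. by elim: s => //= a s; rewrite /mapply /= => ->. Qed.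

Lemma mkseq_cons (v : nat -> bool) n :
  mkseq v n.+1 = v 0 :: mkseq (fun k => v k.+1) n.
Proof. by rewrite /mkseq /= -(addn0 1) iotaDl -map_comp. Qed.

Lemma image_of_eq f v v' u u' :
  v =1 v' -> u =1 u' -> image_of f v u -> image_of f v' u'.
Proof. by move=> Ev Eu fvu n i; rewrite -(eq_mkseq Ev) -Eu; apply: fvu. Qed.

Lemma image_of_mid v : image_of mid v v.
Proof. by move=> n i; rewrite mapply_mid size_mkseq => ?; rewrite nth_mkseq. Qed.

Lemma image_of_mcomp f g t v u :
  image_of f v u -> image_of g t v -> image_of (mcomp f g) t u.
Proof.
move=> fvu gtv n i; rewrite mapply_mcomp.
set s := mapply g (mkseq t n).
have -> : s = mkseq v (size s).
  apply: (@eq_from_nth _ false); first by rewrite size_mkseq.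
  by move=> k ks; rewrite nth_mkseq //; apply: gtv.
exact: fvu.
Qed.

(* [h] conjugates [T'] to a return map of [T] whose excursion from [h y] is
   coded by the word [f (cod' y)]. *)
Lemma image_of_induced_coding (S : Type) (T T' h : S -> S)
    (cod cod' : S -> bool) (P : S -> Prop) (f : morphism) :
  (forall y, P y -> P (T' y)) ->
  (forall y, P y ->
     mkseq (fun j => cod (iter j T (h y))) (size (f (cod' y))) = f (cod' y)) ->
  (forall y, P y -> iter (size (f (cod' y))) T (h y) = h (T' y)) ->
  forall y, P y ->
    image_of f (fun n => cod' (iter n T' y)) (fun n => cod (iter n T (h y))).
Proof.
move=> PT' block return_time y Py n; elim: n y Py => [|n IH] y Py i //=.
rewrite mkseq_cons [mapply _ _]/= size_cat nth_cat.
set k := size (f (cod' y)) => lt_i.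
case: (ltnP i k) => [lt_ik | le_ki].
  by rewrite -(block _ Py) nth_mkseq.
rewrite (eq_mkseq (fun m => congr1 cod' (iterSr m T' y))) in lt_i *.
rewrite (IH _ (PT' _ Py)) -?(return_time _ Py) -?iterD ?subnK //.
by rewrite ltn_subLR.
Qed.

(** * Primitivity *)

Definition is_ab (c : mletter) : bool :=
  match c with La | Lb => true | Lalpha | Lbeta => false end.
Definition is_alphabeta (c : mletter) : bool := ~~ is_ab c.

Lemma mem_mapply f s x y : x \in s -> y \in f x -> y \in mapply f s.
Proof.
elim: s => [|a s IH] //=; rewrite inE [mapply _ _]/= mem_cat.
by case/orP => [/eqP <- -> | /IH H /H ->] //; rewrite orbT.
Qed.

Lemma mem_phi_letter_self c x : x \in phi_letter c x.
Proof. by case: c; case: x. Qed.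

Lemma mem_phi_word_self w x : x \in phi_word w x.
Proof.
elim: w x => [|c w IH] x /=; first by rewrite inE.
exact: mem_mapply (IH x) (mem_phi_letter_self c x).
Qed.

Lemma false_in_phi_word_true w : has is_ab w -> false \in phi_word w true.
Proof.
elim: w => [|c w IH] //= /orP [ab_c | /IH w10].
  by apply: mem_mapply (mem_phi_word_self w true) _; case: c ab_c.
exact: mem_mapply w10 (mem_phi_letter_self c false).
Qed.

Lemma true_in_phi_word_false w : has is_alphabeta w -> true \in phi_word w false.
Proof.
elim: w => [|c w IH] //= /orP [ab_c | /IH w01].
  by apply: mem_mapply (mem_phi_word_self w false) _; case: c ab_c.
exact: mem_mapply w01 (mem_phi_letter_self c true).
Qed.

Lemma phi_word_primitive w :
  has is_ab w -> has is_alphabeta w -> primitive_morphism (phi_word w).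
Proof.
move=> ab alphabeta; exists 1 => x y.
rewrite /mpow /= /mcomp /mid /mapply /= cats0.
by case: x; case: y;
  rewrite ?mem_phi_word_self ?false_in_phi_word_true ?true_in_phi_word_false.
Qed.

(** * Rauzy induction on Sturmian codings *)

Open Scope R_scope.

(* [coding_lower l0 l1 rho] is convertible to
   [fun n => letter_lower l0 (iter n (T_lower l0 l1) rho)], and similarly for
   the upper coding. *)
Definition letter_lower (l0 y : R) : bool :=
  if Rle_dec 0 y then (if Rlt_dec y l0 then false else true) else true.
Definition letter_upper (l0 y : R) : bool :=
  if Rlt_dec 0 y then (if Rle_dec y l0 then false else true) else true.

(* Splitting innermost decisions first makes nested conditionals reduce. *)
Ltac no_Rdec t :=
  lazymatch t with
  | context [Rlt_dec _ _] => fail | context [Rle_dec _ _] => fail | _ => idtac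
  end.

Ltac case_Rdec :=
  match goal with
  | |- context [Rlt_dec ?a ?b] => no_Rdec a; no_Rdec b; destruct (Rlt_dec a b)
  | |- context [Rle_dec ?a ?b] => no_Rdec a; no_Rdec b; destruct (Rle_dec a b)
  end.

Ltac interval_cases :=
  rewrite /mkseq /letter_lower /letter_upper /T_lower /T_upper /=;
  repeat (case_Rdec; rewrite /=); first [done | lra | exfalso; lra].

Ltac induced_coding T T' cod cod' P h :=
  apply: (image_of_induced_coding (T := T) (T' := T') (cod := cod)
            (cod' := cod') (P := P) (h := h));
  [move=> ? ? | move=> ? ? | move=> ? ? | idtac]; interval_cases.

(* For l1 < l0, the map induced by T on [0, l0), and the one induced on
   [l1, l0 + l1) transported by y |-> y + l1, are the exchange with lengths
   (l0 - l1, l1); for l0 < l1 the same holds on [0, l1) and on [l0, l0 + l1)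
   with lengths (l0, l1 - l0).  The return times are the lengths of the images
   of the letters. *)
Section RauzyLower.
Variables l0 l1 y z : R.

Lemma coding_lower_a : 0 < l1 < l0 -> 0 <= y < l0 -> z = y + l1 ->
  image_of (phi_letter La) (coding_lower (l0 - l1) l1 y) (coding_lower l0 l1 z).
Proof.
move=> ? ? ->; induced_coding (T_lower l0 l1) (T_lower (l0 - l1) l1)
  (letter_lower l0) (letter_lower (l0 - l1)) (fun y => 0 <= y < l0)
  (fun y => y + l1).
Qed.

Lemma coding_lower_b : 0 < l1 < l0 -> 0 <= y < l0 -> z = y ->
  image_of (phi_letter Lb) (coding_lower (l0 - l1) l1 y) (coding_lower l0 l1 z).
Proof.
move=> ? ? ->; induced_coding (T_lower l0 l1) (T_lower (l0 - l1) l1)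
  (letter_lower l0) (letter_lower (l0 - l1)) (fun y => 0 <= y < l0)
  (fun y : R => y).
Qed.

Lemma coding_lower_alpha : 0 < l0 < l1 -> 0 <= y < l1 -> z = y ->
  image_of (phi_letter Lalpha) (coding_lower l0 (l1 - l0) y) (coding_lower l0 l1 z).
Proof.
move=> ? ? ->; induced_coding (T_lower l0 l1) (T_lower l0 (l1 - l0))
  (letter_lower l0) (letter_lower l0) (fun y => 0 <= y < l1) (fun y : R => y).
Qed.

Lemma coding_lower_beta : 0 < l0 < l1 -> 0 <= y < l1 -> z = y + l0 ->
  image_of (phi_letter Lbeta) (coding_lower l0 (l1 - l0) y) (coding_lower l0 l1 z).
Proof.
move=> ? ? ->; induced_coding (T_lower l0 l1) (T_lower l0 (l1 - l0))
  (letter_lower l0) (letter_lower l0) (fun y => 0 <= y < l1) (fun y => y + l0).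
Qed.

End RauzyLower.

Section RauzyUpper.
Variables l0 l1 y z : R.

Lemma coding_upper_a : 0 < l1 < l0 -> 0 < y <= l0 -> z = y + l1 ->
  image_of (phi_letter La) (coding_upper (l0 - l1) l1 y) (coding_upper l0 l1 z).
Proof.
move=> ? ? ->; induced_coding (T_upper l0 l1) (T_upper (l0 - l1) l1)
  (letter_upper l0) (letter_upper (l0 - l1)) (fun y => 0 < y <= l0)
  (fun y => y + l1).
Qed.

Lemma coding_upper_b : 0 < l1 < l0 -> 0 < y <= l0 -> z = y ->
  image_of (phi_letter Lb) (coding_upper (l0 - l1) l1 y) (coding_upper l0 l1 z).
Proof.
move=> ? ? ->; induced_coding (T_upper l0 l1) (T_upper (l0 - l1) l1)
  (letter_upper l0) (letter_upper (l0 - l1)) (fun y => 0 < y <= l0)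
  (fun y : R => y).
Qed.

Lemma coding_upper_alpha : 0 < l0 < l1 -> 0 < y <= l1 -> z = y ->
  image_of (phi_letter Lalpha) (coding_upper l0 (l1 - l0) y) (coding_upper l0 l1 z).
Proof.
move=> ? ? ->; induced_coding (T_upper l0 l1) (T_upper l0 (l1 - l0))
  (letter_upper l0) (letter_upper l0) (fun y => 0 < y <= l1) (fun y : R => y).
Qed.

Lemma coding_upper_beta : 0 < l0 < l1 -> 0 < y <= l1 -> z = y + l0 ->
  image_of (phi_letter Lbeta) (coding_upper l0 (l1 - l0) y) (coding_upper l0 l1 z).
Proof.
move=> ? ? ->; induced_coding (T_upper l0 l1) (T_upper l0 (l1 - l0))
  (letter_upper l0) (letter_upper l0) (fun y => 0 < y <= l1) (fun y => y + l0).
Qed.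

End RauzyUpper.

Section Scaling.
Variables k l0 l1 y : R.
Hypothesis k_gt0 : 0 < k.

Lemma iter_T_lower_scale n :
  iter n (T_lower (k * l0) (k * l1)) (k * y) = k * iter n (T_lower l0 l1) y.
Proof.
elim: n => [|n IH] //=; rewrite IH /T_lower; set x := iter n _ y.
by repeat case_Rdec; rewrite /=; first [ring | exfalso; nra].
Qed.

Lemma iter_T_upper_scale n :
  iter n (T_upper (k * l0) (k * l1)) (k * y) = k * iter n (T_upper l0 l1) y.
Proof.
elim: n => [|n IH] //=; rewrite IH /T_upper; set x := iter n _ y.
by repeat case_Rdec; rewrite /=; first [ring | exfalso; nra].
Qed.

Lemma coding_lower_scale :
  coding_lower (k * l0) (k * l1) (k * y) =1 coding_lower l0 l1 y.
Proof.
move=> n; rewrite /coding_lower iter_T_lower_scale; set x := iter n _ y.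
by repeat case_Rdec; rewrite /=; first [done | exfalso; nra].
Qed.

Lemma coding_upper_scale :
  coding_upper (k * l0) (k * l1) (k * y) =1 coding_upper l0 l1 y.
Proof.
move=> n; rewrite /coding_upper iter_T_upper_scale; set x := iter n _ y.
by repeat case_Rdec; rewrite /=; first [done | exfalso; nra].
Qed.

End Scaling.

(** * Periodicity of the Rauzy induction on quadratic lengths *)

Lemma iter_key_cancel (S K : Type) (F : S -> S) (key : S -> K) (P : S -> Prop) :
  (forall s, P s -> P (F s)) ->
  (forall s t, P s -> P t -> key (F s) = key (F t) -> key s = key t) ->
  forall i s t, P s -> P t -> key (iter i F s) = key (iter i F t) -> key s = key t.
Proof.
move=> PF inj; elim=> [|i IH] s t Ps Pt //= E; apply: IH => //.
by apply: inj E; elim: i => //= i; apply: PF.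
Qed.

Lemma pigeonhole_nat (T : eqType) (g : nat -> T) (s : seq T) :
  (forall n, g n \in s) -> exists i j, (i < j)%N /\ g i = g j.
Proof.
move=> gs; have /(uniqPn (g 0%N)) [i [j [ij js]]] : ~~ uniq (mkseq g (size s).+1).
  apply/negP => /uniq_leq_size le.
  have : (size (mkseq g (size s).+1) <= size s)%N by apply: le => x /mapP [n _ ->].
  by rewrite size_mkseq ltnn.
rewrite size_mkseq in js; rewrite !nth_mkseq //; last exact: ltn_trans ij js.
by exists i, j.
Qed.

Definition ratio (p : R * R) : R := p.2 / p.1.
Definition longer0 (p : R * R) : bool := if Rlt_dec p.2 p.1 then true else false.
Definition rauzy (p : R * R) : R * R :=
  if longer0 p then (p.1 - p.2, p.2) else (p.1, p.2 - p.1).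
Definition generic_lens (p : R * R) : Prop := [/\ 0 < p.1, 0 < p.2 & p.1 <> p.2].

(* The branches x / (1 - x) and x - 1 of the Farey map, written as Moebius maps
   so that they also act on the conjugate of x. *)
Definition farey (b : bool) (x : R) : R := if b then / (/ x - 1) else x - 1.

Lemma ratio_rauzy p :
  0 < p.1 -> 0 < p.2 -> ratio (rauzy p) = farey (longer0 p) (ratio p).
Proof.
case: p => a b /= a_gt0 b_gt0; rewrite /ratio /rauzy /farey /longer0 /=.
by case: Rlt_dec => /= ab; rewrite ?Rinv_div; field; lra.
Qed.

Lemma rauzy_generic_gt0 p : generic_lens p -> 0 < (rauzy p).1 /\ 0 < (rauzy p).2.
Proof.
by case: p => a b [/= *]; rewrite /rauzy /longer0 /=; case: Rlt_dec => /= *; lra.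
Qed.

Lemma ratio_rauzy_lt p : generic_lens p ->
  if longer0 p then ratio p < ratio (rauzy p) else ratio (rauzy p) < ratio p.
Proof.
case: p => a b [/= a_gt0 b_gt0 _]; rewrite /ratio /rauzy /longer0 /=.
case: Rlt_dec => /= ab.
  by apply: Rmult_lt_compat_l => //; apply: Rinv_lt_contravar; nra.
by apply: Rmult_lt_compat_r; [apply: Rinv_0_lt_compat | lra].
Qed.

Lemma farey_lt0 b c : c < 0 -> farey b c < 0.
Proof.
case: b => /= c_lt0; last lra.
by apply: Rinv_lt_0_compat; have := Rinv_lt_0_compat _ c_lt0; lra.
Qed.

Lemma farey_inj b : injective (farey b).
Proof.
case: b => x y /=; last lra.
by move/Rinv_eq_reg/(Rplus_eq_reg_r (-1))/Rinv_eq_reg.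
Qed.

Lemma farey_lt0_branch b b' c d :
  c < 0 -> d < 0 -> farey b c = farey b' d -> b = b'.
Proof.
have gt_m1 e : e < 0 -> -1 < farey true e.
  move=> e_lt0 /=; have ie_lt0 := Rinv_lt_0_compat e e_lt0.
  have inv := Rinv_r (/ e - 1) (ltac:(lra)); nra.
case: b; case: b' => // c_lt0 d_lt0 /=.
  by have := gt_m1 c c_lt0; rewrite /=; lra.
by have := gt_m1 d d_lt0; rewrite /=; lra.
Qed.

Lemma irrational_neq x q : irrational x -> x <> IZR q.
Proof. by move=> irr E; apply: irr; exists q, 1%Z; split=> //; rewrite E /=; field. Qed.

Lemma irrational_sub1 x : irrational x -> irrational (x - 1).
Proof.
move=> irr [p [q [q0 E]]]; apply: irr; exists (p + q)%Z, q; split=> //.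
have -> : x = (x - 1) + 1 by ring.
by rewrite E plus_IZR; field; apply: not_0_IZR.
Qed.

Lemma irrational_inv x : irrational x -> irrational (/ x).
Proof.
move=> irr [p [q [q0 E]]]; apply: irr.
have [p0 | p0] := Z.eq_dec p 0.
  exists 0%Z, 1%Z; split=> //.
  by rewrite -(Rinv_inv x) E p0 /Rdiv Rmult_0_l Rinv_0 /=; field.
by exists q, p; split=> //; rewrite -(Rinv_inv x) E Rinv_div.
Qed.

Lemma irrational_farey b x : irrational x -> irrational (farey b x).
Proof.
case: b => irr /=; last exact: irrational_sub1.
exact/irrational_inv/irrational_sub1/irrational_inv.
Qed.

(* A triple (A, B, C) stands for the polynomial A t^2 + B t + C; [qrev] and
   [qshift] substitute 1 / t and t + 1 for t (up to the factor t^2 for [qrev]). *)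
Definition qrev (t : Z * Z * Z) : Z * Z * Z := let: (A, B, C) := t in (C, B, A).
Definition qshift (t : Z * Z * Z) : Z * Z * Z :=
  let: (A, B, C) := t in (A, B + 2 * A, A + B + C)%Z.
Definition qstep (b : bool) (t : Z * Z * Z) : Z * Z * Z :=
  if b then qrev (qshift (qrev t)) else qshift t.
Definition disc (t : Z * Z * Z) : Z :=
  let: (A, B, C) := t in (B * B - 4 * A * C)%Z.
Definition has_roots (t : Z * Z * Z) (x c : R) : Prop :=
  let: (A, B, C) := t in
  A <> 0%Z /\ IZR B = - IZR A * (x + c) /\ IZR C = IZR A * x * c.

Lemma disc_qstep b t : disc (qstep b t) = disc t.
Proof.
by case: b; case: t => [[A B] C]; cbv beta iota delta [disc qstep qrev qshift]; ring.
Qed.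

Lemma has_roots_qrev t x c : x <> 0 -> c <> 0 ->
  has_roots t x c -> has_roots (qrev t) (/ x) (/ c).
Proof.
case: t => [[A B] C] x0 c0 [/= A0 [EB EC]].
have Axc0 : IZR A * x * c <> 0.
  by repeat apply: Rmult_integral_contrapositive_currified => //; apply: not_0_IZR.
split; first by move=> C0; apply: Axc0; rewrite -EC C0.
by rewrite EB EC; split; field.
Qed.

Lemma has_roots_qshift t x c :
  has_roots t x c -> has_roots (qshift t) (x - 1) (c - 1).
Proof.
case: t => [[A B] C] [A0 [EB EC]]; cbv beta iota delta [has_roots qshift].
by rewrite !plus_IZR mult_IZR EB EC; split=> //; split; ring.
Qed.

Lemma has_roots_qstep b t x c : x <> 0 -> x <> 1 -> c < 0 ->
  has_roots t x c -> has_roots (qstep b t) (farey b x) (farey b c).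
Proof.
case: b => x0 x1 c_lt0 xc_roots /=; last exact: has_roots_qshift.
have ic_lt0 := Rinv_lt_0_compat c c_lt0.
apply: has_roots_qrev; [| lra | apply/has_roots_qshift/has_roots_qrev => //; lra].
by move=> ix1; apply: x1; rewrite -(Rinv_inv x) (_ : / x = 1) ?Rinv_1 //; lra.
Qed.

Lemma coef_bound A B C : (A * C < 0)%Z ->
  let D := (B * B - 4 * A * C)%Z in
  (- D <= A <= D /\ - D <= B <= D /\ - D <= C <= D)%Z.
Proof.
move=> AC D.
have [A0 C0] : (A <> 0 /\ C <> 0)%Z by split=> E; rewrite E in AC; lia.
have : (Z.abs A <= - (A * C) /\ Z.abs C <= - (A * C) /\ Z.abs B <= B * B)%Z by nia.
lia.
Qed.

Definition zrange (D : Z) : seq Z :=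
  [seq (Z.of_nat n - D)%Z | n <- iota 0 (Z.to_nat (2 * D + 1))].
Definition zbox (D : Z) : seq (Z * Z * Z) :=
  [seq (ab, c) | ab <- [seq (a, b) | a <- zrange D, b <- zrange D], c <- zrange D].

Lemma mem_zrange D z : (- D <= z <= D)%Z -> z \in zrange D.
Proof.
move=> zD; apply/mapP; exists (Z.to_nat (z + D)); last lia.
by rewrite mem_iota; apply/andP; split; lia.
Qed.

Lemma has_roots_zbox t x c :
  0 < x -> c < 0 -> has_roots t x c -> t \in zbox (disc t).
Proof.
case: t => [[A B] C] x_gt0 c_lt0 [A0 [_ EC]].
have AC : (A * C < 0)%Z.
  apply: lt_IZR; rewrite mult_IZR EC.
  have AAx : 0 < IZR A * IZR A * x.
    by apply: Rmult_lt_0_compat => //; apply: Rsqr_pos_lt; apply: not_0_IZR.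
  rewrite /=; nra.
have [bA [bB bC]] := coef_bound B AC.
apply/allpairsP; exists ((A, B), C); split=> //=; last exact: mem_zrange.
by apply/allpairsP; exists (A, B); split=> //=; apply: mem_zrange.
Qed.

Lemma has_roots_unique t x c y d : 0 < x -> c < 0 -> 0 < y -> d < 0 ->
  has_roots t x c -> has_roots t y d -> x = y /\ c = d.
Proof.
case: t => [[A B] C] x_gt0 c_lt0 y_gt0 d_lt0 [A0 [EB EC]] [_ [EB' EC']].
have A0' := not_0_IZR A A0.
have sum : x + c = y + d by apply: (Rmult_eq_reg_l (- IZR A)); [lra | nra].
have prod : x * c = y * d by apply: (Rmult_eq_reg_l (IZR A)); [nra | done].
(* x is a root of (t - y) (t - d), whose other root d is negative. *)
have xy : (x - y) * (x - d) = 0 by nra.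
by case: (Rmult_integral _ _ xy) => E; split; lra.
Qed.

Record rstate := RState { lens : R * R; conj : R; coefs : Z * Z * Z }.

Definition rstep (s : rstate) : rstate :=
  let b := longer0 (lens s) in
  RState (rauzy (lens s)) (farey b (conj s)) (qstep b (coefs s)).

Definition root_pair (s : rstate) : R * R := (ratio (lens s), conj s).

Definition admissible (s : rstate) : Prop :=
  [/\ 0 < (lens s).1, 0 < (lens s).2, conj s < 0, irrational (ratio (lens s))
    & has_roots (coefs s) (ratio (lens s)) (conj s)].

Lemma admissible_generic s : admissible s -> generic_lens (lens s).
Proof.
case: s => [[a b] c t] [/= a_gt0 b_gt0 _ irr _]; split=> //= ab.
by apply: (irrational_neq (q := 1%Z) irr); rewrite /ratio /= ab; field; lra.
Qed.

Lemma admissible_rstep s : admissible s -> admissible (rstep s).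
Proof.
move=> adm; have gen := admissible_generic adm; have [a_gt0 b_gt0 _] := gen.
have [ra_gt0 rb_gt0] := rauzy_generic_gt0 gen.
case: adm => _ _ c_lt0 irr xc_roots.
rewrite /admissible /rstep /= ratio_rauzy //; split=> //.
- exact: farey_lt0.
- exact: irrational_farey.
- apply: has_roots_qstep => //.
  + exact: (irrational_neq (q := 0%Z)).
  + exact: (irrational_neq (q := 1%Z)).
Qed.

Lemma lens_iter_rstep n s : lens (iter n rstep s) = iter n rauzy (lens s).
Proof. by elim: n => //= n ->. Qed.

Lemma disc_iter_rstep n s : disc (coefs (iter n rstep s)) = disc (coefs s).
Proof. by elim: n => //= n <-; rewrite disc_qstep. Qed.

Lemma admissible_root_pair_inj s t : admissible s -> admissible t ->
  root_pair (rstep s) = root_pair (rstep t) -> root_pair s = root_pair t.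
Proof.
move=> adm_s adm_t; have [s0 s1 _] := admissible_generic adm_s.
have [t0 t1 _] := admissible_generic adm_t.
case: adm_s adm_t => _ _ cs _ _ [_ _ ct _ _].
rewrite /root_pair /rstep /= !ratio_rauzy // => -[Er Ec].
have Eb := farey_lt0_branch cs ct Ec; rewrite Eb in Er Ec.
by rewrite (farey_inj Er) (farey_inj Ec).
Qed.

Lemma admissible_iter n s : admissible s -> admissible (iter n rstep s).
Proof. by move=> adm; elim: n => //= n; apply: admissible_rstep. Qed.

Lemma admissible_ratio_gt0 s : admissible s -> 0 < ratio (lens s).
Proof. by case=> *; apply: Rdiv_lt_0_compat. Qed.

Lemma admissible_periodic s : admissible s ->
  exists2 p, (0 < p)%N & ratio (iter p rauzy (lens s)) = ratio (lens s).
Proof.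
move=> adm; have adm_iter n := admissible_iter n adm.
have [i [j [ij Ecoefs]]] :
    exists i j, (i < j)%N /\ coefs (iter i rstep s) = coefs (iter j rstep s).
  apply: (pigeonhole_nat (s := zbox (disc (coefs s)))) => n.
  rewrite -(disc_iter_rstep n); have [_ _ c_lt0 _ ?] := adm_iter n.
  exact: has_roots_zbox (admissible_ratio_gt0 (adm_iter n)) c_lt0 _.
have Eroots :
    root_pair (iter i rstep s) = root_pair (iter i rstep (iter (j - i) rstep s)).
  rewrite -iterD subnKC ?(ltnW ij) //.
  have [_ _ ci _ rootsi] := adm_iter i; have [_ _ cj _ rootsj] := adm_iter j.
  rewrite Ecoefs in rootsi.
  have [Ex Ec] := has_roots_unique (admissible_ratio_gt0 (adm_iter i)) ci
    (admissible_ratio_gt0 (adm_iter j)) cj rootsi rootsj.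
  by rewrite /root_pair Ex Ec.
have := iter_key_cancel admissible_rstep admissible_root_pair_inj
  adm (adm_iter _) Eroots.
by case=> E _; exists (j - i)%N; rewrite ?subn_gt0 // -lens_iter_rstep E.
Qed.

(** * Fixed points *)

Definition quadratic_lengths (l0 l1 : R) : Prop :=
  exists c t, admissible (RState (l0, l1) c t).

Definition phi_fixed_over (A : seq mletter) (u : nat -> bool) : Prop :=
  exists w, word_over A w /\ primitive_morphism (phi_word w) /\ fixed_by (phi_word w) u.

Lemma phi_fixed_over_eq A u v : u =1 v -> phi_fixed_over A u -> phi_fixed_over A v.
Proof.
by move=> Euv [w [Aw [prim fix_u]]]; exists w; do 2 split=> //; apply: image_of_eq fix_u.
Qed.

Lemma ratio_eq_scale p q : 0 < p.1 -> 0 < q.1 -> ratio q = ratio p ->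
  exists2 k, 0 < k & q = (k * p.1, k * p.2).
Proof.
case: p q => [a b] [a' b'] /= a_gt0 a'_gt0; rewrite /ratio /= => E.
exists (a' / a); first exact: Rdiv_lt_0_compat.
have -> : b' = b' / a' * a' by field; lra.
by rewrite E; congr pair; field; lra.
Qed.

Lemma chain_lt (r : nat -> R) n :
  (0 < n)%N -> (forall k, (k < n)%N -> r k < r k.+1) -> r 0%N < r n.
Proof.
elim: n => [|[|n] IH] // _ incr; first exact: incr.
by apply: Rlt_trans (IH _ _) (incr _ _) => // k kn; apply: incr; apply: ltnW.
Qed.

Lemma rauzy_period_branch n p b : (0 < n)%N ->
  (forall k, (k < n)%N -> generic_lens (iter k rauzy p)) ->
  ratio (iter n rauzy p) = ratio p ->
  exists2 k, (k < n)%N & longer0 (iter k rauzy p) = b.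
Proof.
move=> n_gt0 gen period.
have [/hasP [k] | /hasPn other] :=
  boolP (has (fun k => longer0 (iter k rauzy p) == b) (iota 0 n)).
  by rewrite mem_iota => /andP [_ kn] /eqP; exists k.
have {}other k : (k < n)%N -> longer0 (iter k rauzy p) = ~~ b.
  move=> kn; have := other k; rewrite mem_iota kn => /(_ isT).
  by case: longer0; case: (b).
exfalso; move: other; case: b => other.
- have := chain_lt (r := fun k => - ratio (iter k rauzy p)) n_gt0; rewrite /= period.
  move/(_ _)/Rlt_irrefl; apply=> k kn.
  by have := ratio_rauzy_lt (gen k kn); rewrite other //=; lra.
- have := chain_lt (r := fun k => ratio (iter k rauzy p)) n_gt0; rewrite /= period.
  move/(_ _)/Rlt_irrefl; apply=> k kn.
  by have := ratio_rauzy_lt (gen k kn); rewrite other.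
Qed.

Fixpoint rauzy_word (cA cB : mletter) (n : nat) (p : R * R) : seq mletter :=
  if n is n'.+1 then (if longer0 p then cA else cB) :: rauzy_word cA cB n' (rauzy p)
  else [::].

Section RauzyWord.
Variables (cA cB : mletter) (V : R * R -> nat -> bool).
Hypothesis cA_ab : is_ab cA.
Hypothesis cB_alphabeta : is_alphabeta cB.
Hypothesis stepA :
  forall a b, 0 < b < a -> image_of (phi_letter cA) (V (a - b, b)) (V (a, b)).
Hypothesis stepB :
  forall a b, 0 < a < b -> image_of (phi_letter cB) (V (a, b - a)) (V (a, b)).
Hypothesis V_scale : forall k p, 0 < k -> V (k * p.1, k * p.2) =1 V p.

Lemma rauzy_word_over n p : word_over [:: cA; cB] (rauzy_word cA cB n p).
Proof.
elim: n p => [|n IH] p //=; rewrite /word_over /= in IH *.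
have refl c : mletter_eqb c c by case: c.
by rewrite IH andbT; case: longer0; rewrite /= refl ?orbT.
Qed.

Lemma image_of_rauzy_word n p :
  (forall k, (k < n)%N -> generic_lens (iter k rauzy p)) ->
  image_of (phi_word (rauzy_word cA cB n p)) (V (iter n rauzy p)) (V p).
Proof.
elim: n p => [|n IH] p gen; first exact: image_of_mid.
have gen_next k : (k < n)%N -> generic_lens (iter k rauzy (rauzy p)).
  by move=> kn; rewrite -iterSr; apply: gen.
rewrite iterSr; apply: image_of_mcomp (IH _ gen_next).
have [] := gen 0%N isT; case: p {gen gen_next} => a b /= a_gt0 b_gt0 ab.
by rewrite /rauzy /longer0 /=; case: Rlt_dec => /= ?; [apply: stepA | apply: stepB]; lra.
Qed.

Lemma has_rauzy_word (P : pred mletter) n p k : (k < n)%N ->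
  P (if longer0 (iter k rauzy p) then cA else cB) -> has P (rauzy_word cA cB n p).
Proof.
elim: n p k => [|n IH] p [|k] //= kn Pk; first by rewrite Pk.
by rewrite (IH (rauzy p) k) ?orbT // -iterSr.
Qed.

Lemma rauzy_fixed_point l0 l1 :
  quadratic_lengths l0 l1 -> phi_fixed_over [:: cA; cB] (V (l0, l1)).
Proof.
move=> [c [t adm]]; have [l0_gt0 _ _ _ _] := adm.
have gen k : generic_lens (iter k rauzy (l0, l1)).
  rewrite -(lens_iter_rstep k (RState _ c t)).
  exact/admissible_generic/admissible_iter.
have [n n_gt0 period] := admissible_periodic adm.
exists (rauzy_word cA cB n (l0, l1)); split; first exact: rauzy_word_over.
split.
  have [k1 kn1 long1] := rauzy_period_branch true n_gt0 (fun k _ => gen k) period.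
  have [k2 kn2 long2] := rauzy_period_branch false n_gt0 (fun k _ => gen k) period.
  apply: phi_word_primitive.
    by apply: (has_rauzy_word kn1); rewrite long1.
  by apply: (has_rauzy_word kn2); rewrite long2.
have [gen_n_gt0 _ _] := gen n.
have [k k_gt0 Ek] := ratio_eq_scale l0_gt0 gen_n_gt0 period.
have := image_of_rauzy_word (n := n) (fun k _ => gen k); rewrite Ek.
by apply: image_of_eq => //; apply: V_scale.
Qed.

End RauzyWord.

Lemma coding_lower_fixed l0 l1 : quadratic_lengths l0 l1 ->
  [/\ phi_fixed_over [:: Lb; Lbeta] (coding_lower l0 l1 l1),
      phi_fixed_over [:: Lb; Lalpha] (coding_lower l0 l1 0) &
      phi_fixed_over [:: La; Lalpha] (coding_lower l0 l1 l0)].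
Proof.
move=> ql; split.
- apply: (rauzy_fixed_point (V := fun p => coding_lower p.1 p.2 p.2)) => //.
  + by move=> a b ab /=; apply: coding_lower_b; lra.
  + by move=> a b ab /=; apply: coding_lower_beta; lra.
  + by move=> k [a b] k_gt0; apply: coding_lower_scale.
- apply: (rauzy_fixed_point (V := fun p => coding_lower p.1 p.2 0)) => //.
  + by move=> a b ab /=; apply: coding_lower_b; lra.
  + by move=> a b ab /=; apply: coding_lower_alpha; lra.
  + by move=> k [a b] k_gt0 n; rewrite -{1}(Rmult_0_r k) coding_lower_scale.
- apply: (rauzy_fixed_point (V := fun p => coding_lower p.1 p.2 p.1)) => //.
  + by move=> a b ab /=; apply: coding_lower_a; lra.
  + by move=> a b ab /=; apply: coding_lower_alpha; lra.
  + by move=> k [a b] k_gt0; apply: coding_lower_scale.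
Qed.

Lemma coding_upper_fixed l0 l1 : quadratic_lengths l0 l1 ->
  [/\ phi_fixed_over [:: Lb; Lbeta] (coding_upper l0 l1 l1),
      phi_fixed_over [:: La; Lbeta] (coding_upper l0 l1 (l0 + l1)) &
      phi_fixed_over [:: La; Lalpha] (coding_upper l0 l1 l0)].
Proof.
move=> ql; split.
- apply: (rauzy_fixed_point (V := fun p => coding_upper p.1 p.2 p.2)) => //.
  + by move=> a b ab /=; apply: coding_upper_b; lra.
  + by move=> a b ab /=; apply: coding_upper_beta; lra.
  + by move=> k [a b] k_gt0; apply: coding_upper_scale.
- apply: (rauzy_fixed_point (V := fun p => coding_upper p.1 p.2 (p.1 + p.2))) => //.
  + by move=> a b ab /=; apply: coding_upper_a; lra.
  + by move=> a b ab /=; apply: coding_upper_beta; lra.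
  + by move=> k [a b] k_gt0 n; rewrite /= -Rmult_plus_distr_l coding_upper_scale.
- apply: (rauzy_fixed_point (V := fun p => coding_upper p.1 p.2 p.1)) => //.
  + by move=> a b ab /=; apply: coding_upper_a; lra.
  + by move=> a b ab /=; apply: coding_upper_alpha; lra.
  + by move=> k [a b] k_gt0; apply: coding_upper_scale.
Qed.

Lemma quadratic_lengths_conj theta thetabar :
  quad_irrational_with_conj theta thetabar -> 0 < theta -> thetabar < 0 ->
  quadratic_lengths 1 theta /\ quadratic_lengths theta 1.
Proof.
move=> [irr [a [b [c [a0 [Eq Ebar]]]]]] th_gt0 bar_lt0.
have roots : has_roots (a, b, c) theta thetabar.
  have a0' := not_0_IZR a a0; split=> //.
  have -> : IZR c = - IZR a * theta ^ 2 - IZR b * theta by lra.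
  by rewrite Ebar; split; field.
split.
  by exists thetabar, (a, b, c); rewrite /admissible /ratio /= Rdiv_1_r; split=> //; lra.
exists (/ thetabar), (qrev (a, b, c)); rewrite /admissible /ratio /= Rdiv_1_l.
split; try lra; first exact: Rinv_lt_0_compat.
- exact: irrational_inv.
- by apply: (has_roots_qrev (t := (a, b, c))) => //; lra.
Qed.

Theorem lemma22 (theta thetabar rho l0 l1 : R) (u : nat -> bool) :
  quad_irrational_with_conj theta thetabar ->
  0 < theta < 1 -> thetabar < 0 ->
  0 <= rho <= 1 + theta ->
  (l0 = 1 /\ l1 = theta) \/ (l0 = theta /\ l1 = 1) ->
  sturmian_param l0 l1 rho u ->
  (rho = l1 -> exists w, word_over [:: Lb; Lbeta] w /\
      primitive_morphism (phi_word w) /\ fixed_by (phi_word w) u) /\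
  (rho = 0 -> exists w, word_over [:: Lb; Lalpha] w /\
      primitive_morphism (phi_word w) /\ fixed_by (phi_word w) u) /\
  (rho = l0 + l1 -> exists w, word_over [:: La; Lbeta] w /\
      primitive_morphism (phi_word w) /\ fixed_by (phi_word w) u) /\
  (rho = l0 -> exists w, word_over [:: La; Lalpha] w /\
      primitive_morphism (phi_word w) /\ fixed_by (phi_word w) u).
Proof.
move=> quad [th_gt0 _] bar_lt0 _ lengths sturm.
have ql : quadratic_lengths l0 l1.
  have [ql1 ql2] := quadratic_lengths_conj quad th_gt0 bar_lt0.
  by case: lengths => -[-> ->].
case: sturm => [[rho_range u_coding] | [rho_range u_coding]].
- have [fix_l1 fix_0 fix_l0] := coding_lower_fixed ql.
  have Eu : coding_lower l0 l1 rho =1 u by move=> n; rewrite u_coding.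
  split; [|split; [|split]] => E; rewrite E in Eu rho_range.
  + exact: phi_fixed_over_eq Eu fix_l1.
  + exact: phi_fixed_over_eq Eu fix_0.
  + lra.
  + exact: phi_fixed_over_eq Eu fix_l0.
- have [fix_l1 fix_L fix_l0] := coding_upper_fixed ql.
  have Eu : coding_upper l0 l1 rho =1 u by move=> n; rewrite u_coding.
  split; [|split; [|split]] => E; rewrite E in Eu rho_range.
  + exact: phi_fixed_over_eq Eu fix_l1.
  + lra.
  + exact: phi_fixed_over_eq Eu fix_L.
  + exact: phi_fixed_over_eq Eu fix_l0.
Qed.
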